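(* Let $\Pi=(\mathsf A,\mathsf B)$ and $\Pi'=(\mathsf C,\mathsf D)$ be two $m$-round protocols with $\chi_\Pi\equiv\chi_{\Pi'}$, and let $\mathcal F$ be a frontier of nodes. Assume that $\mathrm{SD}(L_\Pi,L_{\Pi'})\le\varepsilon$, $\Pr_{\ell\leftarrow L_\Pi}[\ell\in\mathcal L_1(\Pi)\mid \ell\in\mathrm{desc}(\mathcal F)]\le\alpha$ and $\Pr_{\ell\leftarrow L_{\Pi'}}[\ell\in\mathcal L_1(\Pi)\mid \ell\in\mathrm{desc}(\mathcal F)]\ge\beta$, for some $\varepsilon>0$ and $0\le\alpha<\beta\le1$. Then $\Pr_{\ell\leftarrow L_\Pi}[\ell\in\mathrm{desc}(\mathcal F)]\le\varepsilon\cdot\frac{1+\beta}{\beta-\alpha}$.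
   Context: An $m$-round single-bit-message protocol is identified with the complete binary tree of height $m$ (nodes are binary strings of length at most $m$, leaves have length $m$); $e_\Pi(u,ub)$ is the probability the next bit is $b$ given transcript $u$, $L_\Pi$ is the distribution of the leaf (full transcript) of a random execution, and $\chi_\Pi$ maps each leaf to the common output in $\{0,1\}$. $\mathcal L_1(\Pi)=\{\ell:\chi_\Pi(\ell)=1\}$. $\mathrm{desc}(\mathcal F)$ is the set of nodes having an ancestor (possibly itself) in $\mathcal F$. A frontier is a set of nodes no one of which is a proper descendant of another. $\mathrm{SD}$ is statistical distance. *)

From mathcomp Require Import all_boot all_order all_algebra.
Set Implicit Arguments. Unset Strict Implicit. Unset Printing Implicit Defensive.
Import Order.TTheory GRing.Theory Num.Theory.
Local Open Scope ring_scope.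

(* Nodes of the complete binary tree of height m are binary strings
   (seq bool) of length <= m; leaves are m.-tuple bool. *)

(* An m-round single-bit-message protocol, as far as its execution
   distribution is concerned: e u b = probability that the next bit is b
   given the partial transcript u  (e_Pi(u, ub)). *)
Definition protocol (R : numDomainType) := seq bool -> bool -> R.

Definition valid_protocol (R : numDomainType) (m : nat) (e : protocol R) :=
  forall u : seq bool, (size u < m)%N ->
    (forall b, 0 <= e u b) /\ e u false + e u true = 1.

Definition leaf_dist (R : numDomainType) (m : nat) (e : protocol R)
  (l : m.-tuple bool) : R :=
  \prod_(i < m) e (take i l) (tnth l i).

Definition Pr (R : numDomainType) (m : nat) (L : m.-tuple bool -> R)
  (A : pred (m.-tuple bool)) : R :=
  \sum_(l : m.-tuple bool | A l) L l.

(* Conditional probability Pr[A | B] (taken to be 0 if Pr[B] = 0). *)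
Definition condPr (R : numFieldType) (m : nat) (L : m.-tuple bool -> R)
  (A B : pred (m.-tuple bool)) : R :=
  Pr L (predI A B) / Pr L B.

Definition SD (R : numFieldType) (m : nat) (L L' : m.-tuple bool -> R) : R :=
  2^-1 * \sum_(l : m.-tuple bool) `|L l - L' l|.

Definition is_prefix (u v : seq bool) : bool := prefix u v.

Definition frontier (m : nat) (F : pred (seq bool)) : Prop :=
  (forall u, F u -> (size u <= m)%N) /\
  (forall u v, F u -> F v -> is_prefix u v -> u = v).

(* desc(F) restricted to leaves: leaves having an ancestor (possibly
   itself) in F. *)
Definition in_desc (m : nat) (F : pred (seq bool)) : pred (m.-tuple bool) :=
  fun l => [exists i : 'I_m.+1, F (take i l)].

Definition L1 (m : nat) (chi : m.-tuple bool -> bool) : pred (m.-tuple bool) :=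
  fun l => chi l.
Arguments leaf_dist {R} m e l.

(* Write p = Pr_Pi[desc F], q = Pr_Pi'[desc F], a = Pr_Pi[L1 /\ desc F] and
   b = Pr_Pi'[L1 /\ desc F].  The conditional hypotheses give a <= alpha p and
   beta q <= b, and statistical distance gives p - q <= eps and b - a <= eps.
   Chaining, beta (p - eps) <= beta q <= b <= a + eps <= alpha p + eps, i.e.
   (beta - alpha) p <= (1 + beta) eps.  The only fact about protocols needed is
   that leaf distributions are probability distributions. *)

From mathcomp Require Import all_boot all_order all_algebra lra.

Set Implicit Arguments.
Unset Strict Implicit.
Unset Printing Implicit Defensive.
Import Order.TTheory GRing.Theory Num.Theory.
Local Open Scope ring_scope.

Lemma big_tuple_cons (R : Type) (idx : R) (op : Monoid.com_law idx)
    (T : finType) k (G : k.+1.-tuple T -> R) :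
  \big[op/idx]_(t : k.+1.-tuple T) G t =
  \big[op/idx]_(x : T) \big[op/idx]_(t : k.-tuple T) G [tuple of x :: t].
Proof.
rewrite pair_big /= (reindex (fun p : T * k.-tuple T => [tuple of p.1 :: p.2])) //=.
exists (fun t : k.+1.-tuple T => (thead t, [tuple of behead t])) => [[x t]|t] _ /=.
  by congr pair; apply: val_inj.
by rewrite [in RHS](tuple_eta t); apply: val_inj.
Qed.

Section ProtocolDistribution.

Variables (R : numDomainType) (m : nat) (e : protocol R).
Hypothesis e_valid : valid_protocol m e.

Definition path_weight (u : seq bool) k (t : k.-tuple bool) : R :=
  \prod_(i < k) e (u ++ take i t) (tnth t i).

Lemma path_weight_cons u k b (t : k.-tuple bool) :
  path_weight u [tuple of b :: t] = e u b * path_weight (rcons u b) t.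
Proof.
rewrite /path_weight big_ord_recl /= cats0; congr (_ * _).
by apply: eq_bigr => i _; rewrite -cats1 -catA add0n tnthS.
Qed.

Lemma sum_path_weight u k : (size u + k <= m)%N ->
  \sum_(t : k.-tuple bool) path_weight u t = 1.
Proof.
elim: k u => [|k IHk] u le_uk_m.
  by under eq_bigr do rewrite /path_weight big_ord0; rewrite sumr_const card_tuple.
have lt_u_m : (size u < m)%N.
  by apply: leq_trans le_uk_m; rewrite addnS ltnS leq_addr.
have [_ sum_e1] := e_valid lt_u_m.
rewrite big_tuple_cons big_bool -sum_e1 addrC.
by congr (_ + _); under eq_bigr do rewrite path_weight_cons;
  rewrite -mulr_sumr IHk ?mulr1 // size_rcons addSnnS.
Qed.

Lemma leaf_dist_sum1 : \sum_(l : m.-tuple bool) leaf_dist m e l = 1.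
Proof. exact: (@sum_path_weight [::] m). Qed.

Lemma leaf_dist_ge0 l : 0 <= leaf_dist m e l.
Proof.
apply: prodr_ge0 => i _.
have lt_i_m : (size (take i l) < m)%N by rewrite size_take size_tuple ltn_ord.
by have [e_ge0 _] := e_valid lt_i_m; apply: e_ge0.
Qed.

End ProtocolDistribution.

Section FiniteDistributions.

Variables (R : realFieldType) (m : nat).
Implicit Types (L : m.-tuple bool -> R) (A B : pred (m.-tuple bool)).

Lemma Pr_ge0 L A : (forall l, 0 <= L l) -> 0 <= Pr L A.
Proof. by move=> L_ge0; apply: sumr_ge0. Qed.

Lemma Pr_predI_le L A B : (forall l, 0 <= L l) -> Pr L (predI A B) <= Pr L B.
Proof.
move=> L_ge0; rewrite /Pr [X in _ <= X](bigID A) /=.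
rewrite (eq_bigl (fun l => B l && A l)) => [|l]; last by rewrite /= andbC.
by rewrite lerDl sumr_ge0.
Qed.

Lemma Pr_condPr_le L A B alpha : (forall l, 0 <= L l) ->
  condPr L A B <= alpha -> Pr L (predI A B) <= alpha * Pr L B.
Proof.
move=> L_ge0; rewrite /condPr.
have [PrB0|PrB_gt0] := eqVneq (Pr L B) 0.
  by move=> _; rewrite PrB0 mulr0 -PrB0 Pr_predI_le.
by rewrite ler_pdivrMr // lt_def PrB_gt0 Pr_ge0.
Qed.

Lemma Pr_condPr_ge L A B beta : (forall l, 0 <= L l) ->
  beta <= condPr L A B -> beta * Pr L B <= Pr L (predI A B).
Proof.
move=> L_ge0; rewrite /condPr.
have [PrB0|PrB_gt0] := eqVneq (Pr L B) 0.
  by move=> _; rewrite PrB0 mulr0 Pr_ge0.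
by rewrite ler_pdivlMr // lt_def PrB_gt0 Pr_ge0.
Qed.

(* With equal total masses, the sums of [L - L'] over [A] and over its
   complement are opposite, so twice [|Pr L A - Pr L' A|] is at most the l1
   distance. *)
Lemma Pr_dist_le_SD L L' A : \sum_l L l = \sum_l L' l ->
  `|Pr L A - Pr L' A| <= SD L L'.
Proof.
move=> mass_eq; rewrite /SD /Pr -sumrB.
have sum_diff0 : \sum_l (L l - L' l) = 0 by rewrite sumrB mass_eq subrr.
rewrite (bigID A) /= in sum_diff0.
have compl_eq : \sum_(l | ~~ A l) (L l - L' l) = - \sum_(l | A l) (L l - L' l).
  by apply/eqP; rewrite -addr_eq0 addrC sum_diff0.
rewrite ler_pdivlMl ?ltr0n // mulr2n mulrDl mul1r [X in _ <= X](bigID A) /=.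
rewrite -[X in _ + X <= _]normrN -compl_eq.
by rewrite lerD // ler_norm_sum.
Qed.

End FiniteDistributions.

Theorem proposition2p8 (R : realFieldType) (m : nat)
  (e e' : protocol R) (chi : m.-tuple bool -> bool)
  (F : pred (seq bool)) (eps alpha beta : R) :
  valid_protocol m e -> valid_protocol m e' ->
  frontier m F ->
  0 < eps -> 0 <= alpha -> alpha < beta -> beta <= 1 ->
  SD (leaf_dist m e) (leaf_dist m e') <= eps ->
  condPr (leaf_dist m e) (L1 chi) (in_desc F) <= alpha ->
  condPr (leaf_dist m e') (L1 chi) (in_desc F) >= beta ->
  Pr (leaf_dist m e) (in_desc F) <= eps * ((1 + beta) / (beta - alpha)).
Proof.
move=> e_valid e'_valid _ _ alpha_ge0 lt_alpha_beta _ SD_le condP condP'.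
have mass_eq : \sum_l leaf_dist m e l = \sum_l leaf_dist m e' l.
  by rewrite !leaf_dist_sum1.
have /ler_normlP[_ desc_le] :=
  le_trans (Pr_dist_le_SD (in_desc F) mass_eq) SD_le.
have /ler_normlP[both_le _] :=
  le_trans (Pr_dist_le_SD (predI (L1 chi) (in_desc F)) mass_eq) SD_le.
have both_le_alpha := Pr_condPr_le (leaf_dist_ge0 e_valid) condP.
have both_ge_beta := Pr_condPr_ge (leaf_dist_ge0 e'_valid) condP'.
rewrite mulrA ler_pdivlMr ?subr_gt0 //.
nra.
Qed.
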